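(* Let $(Y,u)$ and $(Y',u')$ be non-empty ultrametric spaces, let $f:Y\to Y'$ be a map and let $z'\in Y'$ be an attractor for $f$. If $(Y,u)$ is spherically complete, then $z'\in f(Y)$.
   Context: An ultrametric space $(Y,u)$ is a set $Y$ with a map $u$ from $Y\times Y$ onto a totally ordered set $\Gamma$ with last element $\infty$ such that for all $x,y,z\in Y$: $u(y,z)=\infty$ iff $y=z$; $u(y,z)\ge\min\{u(y,x),u(x,z)\}$; $u(y,z)=u(z,y)$. (Larger $u$ means closer.) For $y\in Y$ and $\alpha\in\Gamma$, the closed ball is $B_\alpha(y)=\{z\in Y: u(y,z)\ge\alpha\}$, and $B(x,y):=B_{u(x,y)}(x)$. A ball is a union of a non-empty collection of closed balls which contain a common element. A nest of balls is a set of balls totally ordered by inclusion. $(Y,u)$ is spherically complete if every nest of balls has non-empty intersection. We write $fy$ for $f(y)$. An element $z'\in Y'$ is an attractor for $f:Y\to Y'$ if for every $y\in Y$ with $z'\neq fy$ there is $z\in Y$ such that (AT1) $u'(fz,z')>u'(fy,z')$ and (AT2) $f(B(y,z))\subseteq B(fy,z')$. *)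

Set Implicit Arguments.

(* A totally ordered set with last element [top] (the paper's infinity). *)
Record TotalOrderTop := {
  G :> Type;
  le : G -> G -> Prop;
  le_refl : forall a, le a a;
  le_trans : forall a b c, le a b -> le b c -> le a c;
  le_antisym : forall a b, le a b -> le b a -> a = b;
  le_total : forall a b, le a b \/ le b a;
  top : G;
  le_top : forall a, le a top
}.

(* c >= min{a,b}  iff  c >= a or c >= b  (total order). *)
Definition ge_min (Γ : TotalOrderTop) (c a b : Γ) : Prop := le Γ a c \/ le Γ b c.

Definition lt (Γ : TotalOrderTop) (a b : Γ) : Prop := le Γ a b /\ a <> b.

Definition is_ultrametric (Y : Type) (Γ : TotalOrderTop) (u : Y -> Y -> Γ) : Prop :=
  (forall y z, u y z = top Γ <-> y = z) /\
  (forall x y z, ge_min Γ (u y z) (u y x) (u x z)) /\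
  (forall y z, u y z = u z y) /\
  (forall a : Γ, exists y z, u y z = a).

Definition cball (Y : Type) (Γ : TotalOrderTop) (u : Y -> Y -> Γ)
  (alpha : Γ) (y : Y) : Y -> Prop := fun z => le Γ alpha (u y z).

Definition Bxy (Y : Type) (Γ : TotalOrderTop) (u : Y -> Y -> Γ) (x y : Y) : Y -> Prop :=
  @cball Y Γ u (u x y) x.

(* A ball: union of a non-empty collection of closed balls with a common
   element.  The collection is a predicate on (alpha, center) pairs. *)
Definition is_ball (Y : Type) (Γ : TotalOrderTop) (u : Y -> Y -> Γ) (B : Y -> Prop) : Prop :=
  exists (C : Γ -> Y -> Prop) (c : Y),
    (exists a y, C a y) /\
    (forall a y, C a y -> @cball Y Γ u a y c) /\
    (forall z, B z <-> exists a y, C a y /\ @cball Y Γ u a y z).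

Definition included (Y : Type) (A B : Y -> Prop) : Prop := forall y, A y -> B y.

Definition is_nest (Y : Type) (Γ : TotalOrderTop) (u : Y -> Y -> Γ)
  (N : (Y -> Prop) -> Prop) : Prop :=
  (forall B, N B -> @is_ball Y Γ u B) /\
  (forall B1 B2, N B1 -> N B2 -> included B1 B2 \/ included B2 B1).

Definition spherically_complete (Y : Type) (Γ : TotalOrderTop) (u : Y -> Y -> Γ) : Prop :=
  forall N, @is_nest Y Γ u N -> exists y, forall B, N B -> B y.

Definition attractor (Y Y' : Type) (Γ Γ' : TotalOrderTop)
  (u : Y -> Y -> Γ) (u' : Y' -> Y' -> Γ') (f : Y -> Y') (z' : Y') : Prop :=
  forall y, z' <> f y ->
    exists z, lt Γ' (u' (f y) z') (u' (f z) z') /\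
      included (fun w => exists x, @Bxy Y Γ u y z x /\ w = f x) (@Bxy Y' Γ' u' (f y) z').

Arguments is_ultrametric {Y Γ} u.
Arguments spherically_complete {Y Γ} u.
Arguments attractor {Y Y' Γ Γ'} u u' f z'.

(** Suppose [z'] has no preimage and pick, for every [y], a point [next y] as in
    the attractor property.  Order [Y] by [y1 <= y2] iff [y1 = y2], or [f y2] is
    strictly closer to [z'] than [f y1] and the ball [B(y2, next y2)] lies inside
    [B(y1, next y1)].  A chain without a largest element yields a nest of balls,
    and by spherical completeness a point of its intersection, which is an upper
    bound of the chain.  Zorn's lemma then gives a maximal [t], but [next t] lies
    strictly above [t]. *)

From Stdlib Require Import Classical ClassicalEpsilon.
From mathcomp Require classical_sets boolp.

Set Implicit Arguments.
Unset Strict Implicit.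

Lemma Zorn_prop (T : Type) (R : T -> T -> Prop) :
  (forall t, R t t) -> (forall r s t, R r s -> R s t -> R r t) ->
  (forall s t, R s t -> R t s -> s = t) ->
  (forall A : T -> Prop, classical_sets.total_on A R ->
     exists t, forall s, A s -> R s t) ->
  exists t, forall s, R t s -> s = t.
Proof.
  intros Rrefl Rtrans Ranti Rchain.
  assert (RbE : forall a b, boolp.asbool (R a b) = true <-> R a b).
  { intros a b; split.
    - exact (ssrbool.elimT (boolp.asboolP _)).
    - exact (ssrbool.introT (boolp.asboolP _)). }
  destruct (@classical_sets.Zorn T (fun a b => boolp.asbool (R a b))) as [t Ht].
  - intro t; apply RbE, Rrefl.
  - intros r s t Hrs Hst; apply RbE; apply RbE in Hrs, Hst; eauto.
  - intros s t Hst Hts; apply RbE in Hst, Hts; auto.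
  - intros A HA.
    destruct (Rchain A) as [t Ht].
    + intros s t As At; destruct (HA s t As At) as [H | H]; apply RbE in H; auto.
    + exists t; intros s As; apply RbE, Ht, As.
  - exists t; intros s Hts; apply Ht, RbE, Hts.
Qed.

Section TotalOrder.

Variable Γ : TotalOrderTop.

Lemma lt_irrefl (a : Γ) : ~ lt Γ a a.
Proof. intros [_ H]; apply H; reflexivity. Qed.

Lemma lt_le_trans (a b c : Γ) : lt Γ a b -> le Γ b c -> lt Γ a c.
Proof.
  intros [Hab Hne] Hbc; split; [eapply le_trans; eassumption |].
  intros ->; apply Hne, le_antisym; assumption.
Qed.

Lemma lt_trans (a b c : Γ) : lt Γ a b -> lt Γ b c -> lt Γ a c.
Proof. intros Hab [Hbc _]; exact (lt_le_trans Hab Hbc). Qed.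

End TotalOrder.

Section Ultrametric.

Variables (Y : Type) (Γ : TotalOrderTop) (u : Y -> Y -> Γ).
Hypothesis Hu : is_ultrametric u.

Lemma ultra_sym (x y : Y) : u x y = u y x.
Proof. apply Hu. Qed.

Lemma ultra_le (a : Γ) (x y z : Y) :
  le Γ a (u x y) -> le Γ a (u y z) -> le Γ a (u x z).
Proof.
  intros Hxy Hyz; destruct (proj1 (proj2 Hu) y x z) as [H | H].
  - eapply le_trans; [exact Hxy | exact H].
  - eapply le_trans; [exact Hyz | exact H].
Qed.

Lemma cball_is_ball (a : Γ) (y : Y) : is_ball Γ u (cball Γ u a y).
Proof.
  exists (fun b c => b = a /\ c = y), y; split; [| split].
  - exists a, y; auto.
  - intros b c [-> ->]; unfold cball.
    rewrite (proj2 (proj1 Hu y y) eq_refl); apply le_top.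
  - intro z; split.
    + intro Hz; exists a, y; auto.
    + intros [b [c [[-> ->] Hz]]]; exact Hz.
Qed.

End Ultrametric.

Section ImprovingStep.

Variables (Y Y' : Type) (Γ Γ' : TotalOrderTop).
Variables (u : Y -> Y -> Γ) (u' : Y' -> Y' -> Γ').
Hypotheses (HY : is_ultrametric u) (HY' : is_ultrametric u').
Hypothesis Hsc : spherically_complete u.
Variables (f : Y -> Y') (z' : Y') (next : Y -> Y).

Let d (y : Y) : Γ' := u' (f y) z'.
Let B (y : Y) : Y -> Prop := Bxy Γ u y (next y).

Hypothesis next_closer : forall y, lt Γ' (d y) (d (next y)).
Hypothesis next_ball : forall y,
  included (fun w => exists x, B y x /\ w = f x) (Bxy Γ' u' (f y) z').

Lemma d_le_of_B (s x : Y) : B s x -> le Γ' (d s) (d x).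
Proof.
  intro Hx.
  assert (Hfx : le Γ' (d s) (u' (f s) (f x))) by (apply next_ball; eauto).
  unfold d; destruct (proj1 (proj2 HY') (f s) (f x) z') as [H | H]; [| exact H].
  eapply le_trans; [exact Hfx |]; rewrite (ultra_sym HY'); exact H.
Qed.

(* If the radius of [B x] were smaller, [s] would lie in [B x], forcing
   [d x <= d s]. *)
Lemma B_radius_le (s x : Y) :
  B s x -> lt Γ' (d s) (d x) -> le Γ (u s (next s)) (u x (next x)).
Proof.
  intros Hx Hlt.
  destruct (le_total Γ (u s (next s)) (u x (next x))) as [H | H]; [exact H |].
  assert (Hs : B x s).
  { unfold B, Bxy, cball; rewrite (ultra_sym HY x s).
    eapply le_trans; [exact H | exact Hx]. }
  exfalso; exact (lt_irrefl (lt_le_trans Hlt (d_le_of_B Hs))).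
Qed.

Lemma B_sub (s x : Y) : B s x -> lt Γ' (d s) (d x) -> included (B x) (B s).
Proof.
  intros Hx Hlt w Hw.
  apply (ultra_le HY (y := x)); [exact Hx |].
  eapply le_trans; [apply B_radius_le |]; eassumption.
Qed.

Let R (a b : Y) : Prop :=
  a = b \/ (lt Γ' (d a) (d b) /\ included (B b) (B a)).

Lemma R_next (s : Y) : R s (next s).
Proof.
  right; split; [apply next_closer |].
  apply B_sub; [apply le_refl | apply next_closer].
Qed.

Lemma R_trans (a b c : Y) : R a b -> R b c -> R a c.
Proof.
  intros [-> | [Hab Bab]] [-> | [Hbc Bbc]]; unfold R; auto.
  right; split; [eapply lt_trans; eassumption |].
  intros w Hw; auto.
Qed.

Lemma R_antisym (a b : Y) : R a b -> R b a -> a = b.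
Proof.
  intros [-> | [Hab _]] [Hba | [Hba _]]; auto.
  exfalso; exact (lt_irrefl (lt_trans Hab Hba)).
Qed.

Lemma chain_balls_nest (A : Y -> Prop) :
  classical_sets.total_on A R -> is_nest Γ u (fun Bl => exists s, A s /\ Bl = B s).
Proof.
  intro HA; split.
  - intros Bl [s [_ ->]]; apply cball_is_ball, HY.
  - intros B1 B2 [s1 [A1 ->]] [s2 [A2 ->]].
    destruct (HA s1 s2 A1 A2) as [[-> | [_ H]] | [-> | [_ H]]];
      unfold included; auto.
Qed.

(* Without a largest element, a point in all the balls of the chain is
   strictly closer than every element of the chain. *)
Lemma chain_center_upper_bound (A : Y -> Prop) (x : Y) :
  classical_sets.total_on A R -> ~ (exists s0, A s0 /\ forall s, A s -> R s s0) ->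
  (forall s, A s -> B s x) -> forall s, A s -> R s x.
Proof.
  intros HA Hnomax Hx s As.
  assert (Hlt : lt Γ' (d s) (d x)).
  { apply NNPP; intro Hnlt; apply Hnomax; exists s; split; [exact As |].
    intros s' As'; destruct (HA s s' As As') as [[<- | [Hss' _]] | Hs's];
      [left; reflexivity | | exact Hs's].
    exfalso; apply Hnlt; exact (lt_le_trans Hss' (d_le_of_B (Hx s' As'))). }
  right; split; [exact Hlt | apply B_sub; auto].
Qed.

Lemma chain_bounded (A : Y -> Prop) :
  classical_sets.total_on A R -> exists t, forall s, A s -> R s t.
Proof.
  intro HA.
  destruct (classic (exists s0, A s0 /\ forall s, A s -> R s s0))
    as [[s0 [_ Hs0]] | Hnomax].
  - exists (next s0); intros s As; exact (R_trans (Hs0 s As) (R_next s0)).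
  - destruct (Hsc (chain_balls_nest HA)) as [x Hx].
    exists x; apply (chain_center_upper_bound HA Hnomax).
    intros s As; apply Hx; eauto.
Qed.

Lemma no_improving_step : False.
Proof.
  destruct (Zorn_prop (R := R)) as [t Ht].
  - intro t; left; reflexivity.
  - exact R_trans.
  - exact R_antisym.
  - exact chain_bounded.
  - apply (lt_irrefl (a := d t)); rewrite <- (Ht _ (R_next t)) at 2.
    apply next_closer.
Qed.

End ImprovingStep.

Theorem theorem1 (Y Y' : Type) (Γ Γ' : TotalOrderTop)
  (u : Y -> Y -> Γ) (u' : Y' -> Y' -> Γ')
  (HY : is_ultrametric u) (HY' : is_ultrametric u')
  (Yne : inhabited Y) (Y'ne : inhabited Y')
  (f : Y -> Y') (z' : Y') (Hatt : attractor u u' f z')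
  (Hsc : spherically_complete u) :
  exists y, f y = z'.
Proof.
  apply NNPP; intro Hnopre.
  assert (Hstep : forall y, exists z,
    lt Γ' (u' (f y) z') (u' (f z) z') /\
    included (fun w => exists x, Bxy Γ u y z x /\ w = f x) (Bxy Γ' u' (f y) z')).
  { intro y; apply Hatt; intro Hy; apply Hnopre; exists y; auto. }
  destruct (choice _ Hstep) as [next Hnext].
  exact (no_improving_step HY HY' Hsc
           (next := next) (fun y => proj1 (Hnext y)) (fun y => proj2 (Hnext y))).
Qed.
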